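(* Let $k\ge2$, $\ell\ge1$, and start with $k^\ell$ labeled chips on the root of the infinite rooted directed $k$-ary tree. Consider any stable configuration reached by labeled chip-firing. Let $v$ be any vertex on a layer $t$ with $1\le t\le \ell+1$, and let $S$ be the set of chips which, in the stable configuration, lie in the subtree rooted at $v$. Then the smallest chip of $S$ lies on the bottom straight left descendant of $v$ and the largest chip of $S$ lies on the bottom straight right descendant of $v$.
   Context: The infinite rooted directed $k$-ary tree: every vertex has $k$ children ordered left to right, edges directed from parent to child; the root is on layer $1$, children of a layer-$t$ vertex are on layer $t+1$. Labeled chip-firing: a vertex with at least $k$ chips may fire by choosing any $k$ of its chips and sending the $i$-th smallest label among them to its $i$-th leftmost child; a configuration is stable when no vertex has $\ge k$ chips. With $k^\ell$ chips initially at the root, every stable configuration has exactly one chip on each vertex of layer $\ell+1$ and no other chips. The bottom straight left (resp. right) descendant of a vertex $v$ on layer $t\le \ell+1$ is the unique vertex on layer $\ell+1$ reached from $v$ by repeatedly moving to the leftmost (resp. rightmost) child (it is $v$ itself if $t=\ell+1$). *)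

From mathcomp Require Import all_boot.
Set Implicit Arguments. Unset Strict Implicit. Unset Printing Implicit Defensive.

(* Vertices of the infinite rooted k-ary tree: the root is [::]; the i-th
   leftmost child (i = 0, ..., k-1) of v is rcons v i.  A vertex v lies on
   layer (size v).+1.  Edges go from v to rcons v i. *)
Definition vertex := seq nat.

Definition child (v : vertex) (i : nat) : vertex := rcons v i.

Definition layer (v : vertex) : nat := (size v).+1.

Definition is_vertex (k : nat) (v : vertex) : bool := all (fun i => i < k) v.

Definition in_subtree (v w : vertex) : bool := prefix v w.

(* Labeled chips: N chips labeled by 'I_N (labels ordered as naturals).
   A configuration records the vertex where each chip lies. *)
Definition config (N : nat) := 'I_N -> vertex.

Definition chips_at N (c : config N) (v : vertex) : {set 'I_N} :=
  [set x | c x == v].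

(* rank of chip x among the chips of A: number of chips of A with a
   smaller label (0-based); so the i-th smallest (1-based) goes to the
   i-th leftmost child. *)
Definition rank N (A : {set 'I_N}) (x : 'I_N) : nat :=
  #|[set y in A | (y < x)%N]|.

Definition fire N (c : config N) (v : vertex) (A : {set 'I_N}) : config N :=
  fun x => if x \in A then child v (rank A x) else c x.

Definition fire_step (k N : nat) (c c' : config N) : Prop :=
  exists v (A : {set 'I_N}),
    [/\ #|A| = k, A \subset chips_at c v & c' = fire c v A].

Inductive reachable (k N : nat) (c0 : config N) : config N -> Prop :=
| reach_refl : reachable k c0 c0
| reach_step c c' : reachable k c0 c -> fire_step k c c' -> reachable k c0 c'.

Definition stable (k N : nat) (c : config N) : Prop :=
  forall v : vertex, #|chips_at c v| < k.

Definition root_config N : config N := fun _ => [::].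

Definition bottom_left (l : nat) (v : vertex) : vertex :=
  v ++ nseq (l.+1 - layer v) 0.
Definition bottom_right (k l : nat) (v : vertex) : vertex :=
  v ++ nseq (l.+1 - layer v) k.-1.

From mathcomp Require Import all_boot zify.
Set Implicit Arguments. Unset Strict Implicit. Unset Printing Implicit Defensive.

(* Two invariants survive every firing from the root.  Since a firing sends
   one chip to each child, sibling subtrees always hold equally many chips.
   Since it sends its smallest chip leftmost, the smallest chip of any
   subtree lies at the subtree's root or below its leftmost child (and
   symmetrically for the largest chip and the rightmost child).  In a stable
   configuration the first invariant and stability force the subtree of a
   layer-t vertex to hold exactly k^(l+1-t) chips, all of them on layer l+1;
   the second invariant then walks the smallest (largest) chip of the
   subtree of v down the leftmost (rightmost) branch. *)

Section Prefix.
Variable T : eqType.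
Implicit Types (s t : seq T) (a b : T).

Lemma prefix_rconsE s t a : prefix s (rcons t a) = prefix s t || (s == rcons t a).
Proof.
elim: t s => [|y t IH] [|x s] //=.
by rewrite IH eqseq_cons andb_orr.
Qed.

Lemma prefix_size_eq s t : prefix s t -> size t <= size s -> s = t.
Proof.
move=> /prefixP[r ->]; rewrite size_cat => h.
have -> : r = [::] by case: r h => //= ? ?; lia.
by rewrite cats0.
Qed.

Lemma rcons_prefixF s a : prefix (rcons s a) s = false.
Proof. by apply/negbTE/negP => /size_prefix; rewrite size_rcons ltnn. Qed.

Lemma prefix_rcons2 s a b : prefix (rcons s a) (rcons s b) = (a == b).
Proof.
apply/idP/eqP => [h|->]; last exact: prefix_refl.
have := prefix_size_eq h; rewrite !size_rcons leqnn => /(_ isT) /eqP.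
by rewrite eqseq_rcons eqxx => /eqP.
Qed.

End Prefix.

Section Rank.
Variable N : nat.
Implicit Types (A : {set 'I_N}) (x y : 'I_N).

Lemma rank_lt_card A x : x \in A -> rank A x < #|A|.
Proof.
move=> xA; apply: (@leq_ltn_trans #|A :\ x|); last by rewrite (cardsD1 x A) xA.
apply/subset_leq_card/subsetP => y; rewrite !inE => /andP[-> yx]; rewrite andbT.
by apply: contraTneq yx => ->; rewrite ltnn.
Qed.

Lemma rank_ltn_mono A x y : x \in A -> y \in A -> x < y -> rank A x < rank A y.
Proof.
move=> xA yA xy; apply/proper_card/properP; split.
  by apply/subsetP => z; rewrite !inE => /andP[-> zx]; apply: ltn_trans zx xy.
by exists x; rewrite !inE ?xA ?ltnn ?andbF.
Qed.

Lemma rank_inj A : {in A &, injective (rank A)}.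
Proof.
move=> x y xA yA e; apply/val_inj/eqP; case: ltngtP => // h.
  by have := rank_ltn_mono xA yA h; rewrite e ltnn.
by have := rank_ltn_mono yA xA h; rewrite e ltnn.
Qed.

Lemma rank_surj A i : i < #|A| -> exists2 z, z \in A & rank A z = i.
Proof.
move=> iA; pose g z : 'I_#|A| := insubd (Ordinal iA) (rank A z).
have gE z : z \in A -> val (g z) = rank A z.
  by move=> zA; rewrite /g insubdK //; apply: rank_lt_card.
have /imsetP[z zA /(congr1 val)] : Ordinal iA \in g @: A.
  suff -> : g @: A = setT by rewrite inE.
  apply/eqP; rewrite eqEcard subsetT cardsT card_ord card_in_imset ?leqnn //.
  by move=> x y xA yA /(congr1 val); rewrite !gE //; apply: rank_inj.
by rewrite gE //; exists z.
Qed.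

Lemma sum_rank_eq A i : i < #|A| -> \sum_(z in A) (rank A z == i : nat) = 1.
Proof.
case/rank_surj => z zA rz; apply/eqP/sum_nat_eq1; exists z; split => //.
  by rewrite rz eqxx.
move=> y yz yA; apply/eqP; rewrite eqb0 -rz.
by apply: contra yz => /eqP/(rank_inj yA zA)->.
Qed.

Lemma rank_min A x : (forall y, y \in A -> x <= y) -> rank A x = 0.
Proof.
move=> xmin; apply/eqP; rewrite /rank cards_eq0; apply/eqP/setP => y; rewrite !inE.
by apply/andP => -[/xmin]; rewrite leqNgt => /negbTE->.
Qed.

Lemma rank_max A x : x \in A -> (forall y, y \in A -> y <= x) -> rank A x = #|A|.-1.
Proof.
move=> xA xmax; rewrite (cardsD1 x A) xA add1n /rank /=; apply: eq_card => y.
rewrite !inE ltn_neqAle andbC; case yA: (y \in A); rewrite ?andbF //=.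
by rewrite xmax // andbT (inj_eq val_inj).
Qed.

End Rank.

Lemma prefix_children k u w : is_vertex k w ->
  (prefix u w : nat) = (w == u) + \sum_(i < k) (prefix (rcons u i) w : nat).
Proof.
move=> wk; have [/prefixP[[|a s] ew]|uw] := boolP (prefix u w).
- rewrite ew cats0 eqxx big1 // => i _.
  by rewrite rcons_prefixF.
- move: wk; rewrite ew /is_vertex all_cat /= => /and3P[_ ak _].
  have -> : (u ++ a :: s == u) = false.
    by apply/negbTE; apply: contraTneq isT => /(congr1 size); rewrite size_cat /=; lia.
  rewrite (bigD1 (Ordinal ak)) //= big1 => [|i ia].
    by rewrite -cats1 prefix_catr // eqxx /= eqxx prefix0s.
  rewrite -cats1 prefix_catr //= eqxx /= prefix0s andbT.
  by apply/eqP; rewrite eqb0; apply: contra ia => /eqP ai; apply/eqP/val_inj.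
- have -> : (w == u) = false by apply: contraNF uw => /eqP->; apply: prefix_refl.
  rewrite big1 // => i _; apply/eqP; rewrite eqb0.
  by apply: contra uw; apply: prefix_trans (prefix_rcons u i).
Qed.

Section Firing.
Variables (N k : nat).
Implicit Types (c : config N) (u w : vertex).

Definition on_tree c := forall x, is_vertex k (c x).

Definition subtree_chips c w := \sum_(x : 'I_N) (prefix w (c x) : nat).

Definition balanced c := forall u i j, i < k -> j < k ->
  subtree_chips c (rcons u i) = subtree_chips c (rcons u j).

Definition extremum_in_child b (cmp : rel nat) c := forall u x, prefix u (c x) ->
  exists y : 'I_N, cmp y x /\ ((c y == u) || prefix (rcons u b) (c y)).

Variables (c : config N) (v : vertex) (A : {set 'I_N}).
Hypothesis Av : A \subset chips_at c v.

Lemma fired_at x : x \in A -> c x = v.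
Proof. by move/(subsetP Av); rewrite inE => /eqP. Qed.

Lemma fire_in x : x \in A -> fire c v A x = rcons v (rank A x).
Proof. by rewrite /fire => ->. Qed.

Lemma fire_notin x : x \notin A -> fire c v A x = c x.
Proof. by rewrite /fire => /negbTE->. Qed.

Lemma subtree_chips_fire w :
  subtree_chips (fire c v A) w + \sum_(x in A) (prefix w v : nat) =
  subtree_chips c w + \sum_(x in A) (prefix w (rcons v (rank A x)) : nat).
Proof.
rewrite /subtree_chips [X in X + _](bigID (mem A)) [X in _ = X + _](bigID (mem A)) /=.
rewrite addnAC [RHS]addnAC [in RHS](addnC (\sum_(x in A) _)).
congr (_ + _ + _); apply: eq_bigr => x.
- by move/fire_in->.
- by move/fired_at->.
- by move/fire_notin->.
Qed.

Lemma extremum_in_child_fire b (cmp : rel nat) y0 :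
  reflexive cmp -> transitive cmp ->
  y0 \in A -> rank A y0 = b -> (forall z, z \in A -> cmp y0 z) ->
  extremum_in_child b cmp c -> extremum_in_child b cmp (fire c v A).
Proof.
move=> cmp_refl cmp_trans y0A ry0 y0min ext u x.
have keep y : u != v -> (c y == u) || prefix (rcons u b) (c y) ->
    (fire c v A y == u) || prefix (rcons u b) (fire c v A y).
  move=> uv; have [yA|/fire_notin -> //] := boolP (y \in A).
  rewrite fire_in // (fired_at yA) eq_sym (negbTE uv) => /= ubv.
  by rewrite (prefix_trans ubv (prefix_rcons _ _)) orbT.
have old : prefix u (c x) -> exists y : 'I_N, cmp y x /\
    ((fire c v A y == u) || prefix (rcons u b) (fire c v A y)).
  case/ext => y [yx]; case: (eqVneq v u) => [<-{u keep} near_y|uv near_y].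
    have [yA|yA] := boolP (y \in A); last by exists y; rewrite fire_notin.
    exists y0; split; first exact: cmp_trans _ _ _ (y0min _ yA) yx.
    by rewrite fire_in // ry0 prefix_refl orbT.
  by exists y; split => //; apply: keep; rewrite // eq_sym.
have [xA|/fire_notin-> //] := boolP (x \in A).
rewrite fire_in // prefix_rconsE => /orP[uv|/eqP->].
  by apply: old; rewrite (fired_at xA).
by exists x; rewrite fire_in // eqxx.
Qed.

Hypothesis cardA : #|A| = k.

Lemma on_tree_fire : on_tree c -> on_tree (fire c v A).
Proof.
move=> ct x; have [xA|/fire_notin->] := boolP (x \in A); last exact: ct.
rewrite fire_in // /is_vertex all_rcons -cardA rank_lt_card //= cardA.
by rewrite -(fired_at xA); apply: ct.
Qed.

Lemma balanced_fire : balanced c -> balanced (fire c v A).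
Proof.
move=> bc u i j ik jk; have [<-{u}|uv] := eqVneq v u.
  have out t : \sum_(x in A) (prefix (rcons v t) v : nat) = 0.
    by apply: big1 => x _; rewrite rcons_prefixF.
  have into t : t < k ->
      \sum_(x in A) (prefix (rcons v t) (rcons v (rank A x)) : nat) = 1.
    move=> tk; rewrite -(sum_rank_eq (_ : t < #|A|)) ?cardA //.
    by apply: eq_bigr => x _; rewrite prefix_rcons2 eq_sym.
  have fired t : t < k ->
      subtree_chips (fire c v A) (rcons v t) = (subtree_chips c (rcons v t)).+1.
    by move=> tk; rewrite -[LHS]addn0 -(out t) subtree_chips_fire into ?addn1.
  by rewrite !fired // (bc v i j).
have kept t : subtree_chips (fire c v A) (rcons u t) = subtree_chips c (rcons u t).
  apply/(@addIn (\sum_(x in A) (prefix (rcons u t) v : nat))).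
  rewrite subtree_chips_fire; congr (_ + _); apply: eq_bigr => x _.
  by rewrite prefix_rconsE eqseq_rcons eq_sym (negbTE uv) andFb orbF.
by rewrite !kept (bc u i j).
Qed.

End Firing.

Lemma reachable_invariants N k c : 0 < k -> reachable k (@root_config N) c ->
  [/\ on_tree k c, balanced k c,
      extremum_in_child 0 leq c & extremum_in_child k.-1 geq c].
Proof.
move=> k_gt0; elim=> [|{}c c' _ [ct bc lc gc] [v [A [cardA Av ->]]]].
  have root_ext b cmp : reflexive cmp -> extremum_in_child b cmp (@root_config N).
    by move=> cmp_refl u x; rewrite prefixs0 => /eqP->; exists x; rewrite eqxx.
  split=> //; try by apply: root_ext => n; apply: leqnn.
  by move=> u i j _ _; rewrite /subtree_chips !big1 // => x _; case: u.
have /card_gt0P[x0 x0A] : 0 < #|A| by rewrite cardA.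
have [ymin yminA yminP] := arg_minnP (fun x : 'I_N => val x) x0A.
have [ymax ymaxA ymaxP] := arg_maxnP (fun x : 'I_N => val x) x0A.
split; [exact: on_tree_fire | exact: balanced_fire | |].
- apply: (extremum_in_child_fire Av leqnn leq_trans yminA _ yminP lc).
  exact: rank_min.
- apply: (extremum_in_child_fire (cmp := geq) Av _ _ ymaxA _ ymaxP gc).
  + exact: leqnn.
  + by move=> m n p nm pn; apply: leq_trans pn nm.
  + by rewrite (rank_max ymaxA ymaxP) cardA.
Qed.

Lemma subtree_chips_children N k (c : config N) u : 0 < k ->
  on_tree k c -> balanced k c ->
  subtree_chips c u = #|chips_at c u| + k * subtree_chips c (rcons u 0).
Proof.
move=> k_gt0 ct bc.
have -> : k * subtree_chips c (rcons u 0) = \sum_(i < k) subtree_chips c (rcons u i).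
  by rewrite -[k in LHS]card_ord -sum_nat_const; apply: eq_bigr => i _; apply: bc.
rewrite /subtree_chips exchange_big -sum1_card [\sum_(i in _) 1]big_mkcond -big_split /=.
by apply: eq_bigr => x _; rewrite inE (prefix_children u (ct x)); case: eqP.
Qed.

Lemma small_add_mul_eq k a m n : a < k -> a + k * m = k * n -> a = 0 /\ m = n.
Proof.
move=> ak e; have a0 : a = 0.
  by rewrite -(modn_small ak) -(modnMDl m) mulnC addnC e modnMr.
split=> //; apply/eqP; rewrite -(eqn_pmul2l (leq_ltn_trans (leq0n a) ak)).
by rewrite -e a0.
Qed.

Section Stable.
Variables (k l : nat) (c : config (k ^ l)).
Hypotheses (k_gt1 : 1 < k) (ct : on_tree k c) (bc : balanced k c) (sc : stable k c).

Let k_gt0 : 0 < k. Proof. exact: ltnW. Qed.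

Lemma stable_split u : size u < l -> subtree_chips c u = k ^ (l - size u) ->
  #|chips_at c u| = 0 /\ subtree_chips c (rcons u 0) = k ^ (l - (size u).+1).
Proof.
move=> ul cu; apply: (small_add_mul_eq (sc u)).
by rewrite -subtree_chips_children // cu -expnS subnSK.
Qed.

Lemma stable_subtree_chips u : is_vertex k u -> size u <= l ->
  subtree_chips c u = k ^ (l - size u).
Proof.
elim/last_ind: u => [_ _|u i IH].
  rewrite /subtree_chips subn0 -[k ^ l in RHS]card_ord -sum1_card.
  by apply: eq_bigr => x _; rewrite prefix0s.
rewrite /is_vertex all_rcons size_rcons => /andP[ik uk] ul.
have [_ <-] := stable_split ul (IH uk (ltnW ul)).
exact: bc.
Qed.

Lemma stable_no_chip u : is_vertex k u -> size u < l -> chips_at c u = set0.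
Proof.
move=> uk ul; apply/eqP; rewrite -cards_eq0.
by have [-> _] := stable_split ul (stable_subtree_chips uk (ltnW ul)).
Qed.

Lemma stable_chip_depth x : size (c x) <= l.
Proof.
rewrite leqNgt; apply/negP => lx.
set u := take l (c x); set i := nth 0 (c x) l.
have uk : is_vertex k u.
  by move: (ct x); rewrite /is_vertex -(cat_take_drop l (c x)) all_cat => /andP[].
have ik : i < k by apply: (allP (ct x)); rewrite mem_nth.
have ul : size u = l by rewrite size_take lx.
have cu : subtree_chips c u = 1 by rewrite stable_subtree_chips // ul ?subnn.
have c0 : subtree_chips c (rcons u 0) = 0.
  move: cu; rewrite (subtree_chips_children u k_gt0 ct bc).
  by case: (subtree_chips c (rcons u 0)) => // n; rewrite mulnS; lia.
have := bc u ik k_gt0; rewrite c0 /subtree_chips (bigD1 x) //=.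
by rewrite /u /i -take_nth // prefix_take.
Qed.

Lemma extremum_on_branch b (cmp : rel nat) v m : b < k -> antisymmetric cmp ->
  extremum_in_child b cmp c -> is_vertex k v -> size v <= l -> prefix v (c m) ->
  (forall y, prefix v (c y) -> cmp m y) -> c m = v ++ nseq (l - size v) b.
Proof.
move=> bk cmp_anti ext vk vl vm mP.
suff branch j : j <= l - size v -> prefix (v ++ nseq j b) (c m).
  apply/esym/prefix_size_eq; first exact: branch.
  by rewrite size_cat size_nseq subnKC //; apply: stable_chip_depth.
elim: j => [|j IH] jl; first by rewrite cats0.
set u := v ++ nseq j b; have um : prefix u (c m) by apply: IH; lia.
have [y [ym /orP[/eqP yu|uy]]] := ext u m um.
  have uk : is_vertex k u by rewrite /u /is_vertex all_cat all_nseq bk orbT andbT.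
  have ul : size u < l by rewrite size_cat size_nseq; lia.
  by have := stable_no_chip uk ul; move/setP/(_ y); rewrite !inE yu eqxx.
have vy : prefix v (c y).
  exact: prefix_trans (prefix_prefix v _) (prefix_trans (prefix_rcons u b) uy).
have -> : m = y by apply/val_inj/cmp_anti; rewrite ym mP.
by rewrite -addn1 nseqD catA cats1.
Qed.

End Stable.

Theorem lemma2p1 (k l : nat) (hk : 2 <= k) (hl : 1 <= l)
  (c : config (k ^ l))
  (hreach : reachable k (@root_config (k ^ l)) c)
  (hstab : stable k c)
  (v : vertex) (hv : is_vertex k v) (ht : 1 <= layer v <= l.+1) :
  let S := [set x | in_subtree v (c x)] in
  (exists2 x, x \in S & ((forall y, y \in S -> (x <= y)%N) /\ c x = bottom_left l v)) /\
  (exists2 x, x \in S & ((forall y, y \in S -> (y <= x)%N) /\ c x = bottom_right k l v)).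
Proof.
move=> S; have inS x : (x \in S) = prefix v (c x) by rewrite inE.
have k_gt0 : 0 < k by apply: ltnW.
have [ct bc minc maxc] := reachable_invariants k_gt0 hreach.
have vl : size v <= l by case/andP: ht.
have [x0 x0S] : exists x0, x0 \in S.
  have : 0 < subtree_chips c v.
    by rewrite (stable_subtree_chips hk ct bc hstab hv vl) expn_gt0 k_gt0.
  rewrite lt0n sum_nat_eq0 => /forallPn[x]; rewrite eqb0 negbK => vx.
  by exists x; rewrite inS.
rewrite /bottom_left /bottom_right /layer subSS.
have [m mS mP] := arg_minnP (fun x : 'I_(k ^ l) => val x) x0S.
have [M MS MP] := arg_maxnP (fun x : 'I_(k ^ l) => val x) x0S.
split; [exists m | exists M] => //; split => //.
- apply: (extremum_on_branch hk ct bc hstab k_gt0 anti_leq minc hv vl).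
    by rewrite -inS.
  by move=> y vy; apply: (mP y (_ : y \in S)); rewrite inS.
- apply: (extremum_on_branch hk ct bc hstab _ _ maxc hv vl).
  + by rewrite ltn_predL.
  + by move=> a b; rewrite andbC; apply: anti_leq.
  + by rewrite -inS.
  + by move=> y vy; apply: (MP y (_ : y \in S)); rewrite inS.
Qed.
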